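(* Let $J_1=\sigma_1/2$, $J_2=\sigma_2/2$ on $\mathbb{C}^2$, and let $\#(x,y)=(\#_{ij}(x,y))_{i,j=1,2}$ be a $2\times2$-matrix-valued tempered distribution on $\mathbb{R}^2$ (components in the standard basis, i.e. the eigenbasis of $\sigma_3$) such that, for every density operator $\rho$, the distribution $P_\rho(x,y)=\mathrm{Tr}[\#(x,y)\rho]$ has the correct marginals: $\int P_\rho(x,y)\,dy=\sum_{\alpha=\pm1/2}\mathrm{Tr}[E_{J_1}(\alpha)\rho]\,\delta(x-\alpha)$ and $\int P_\rho(x,y)\,dx=\sum_{\beta=\pm1/2}\mathrm{Tr}[E_{J_2}(\beta)\rho]\,\delta(y-\beta)$. Then the map $\rho\mapsto P_\rho$ is injective on density operators on $\mathbb{C}^2$ if and only if $\#_{11}\neq\#_{22}$ (as distributions).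
   Context: Pauli matrices: $\sigma_1=\begin{pmatrix}0&1\\1&0\end{pmatrix}$, $\sigma_2=\begin{pmatrix}0&-i\\i&0\end{pmatrix}$, $\sigma_3=\begin{pmatrix}1&0\\0&-1\end{pmatrix}$. $E_{A}(\alpha)$ denotes the orthogonal projection onto the eigenspace of the Hermitian operator $A$ with eigenvalue $\alpha$. A density operator is a positive semidefinite trace-one operator. *)

From HB Require Import structures.
From mathcomp Require Import all_boot all_order all_algebra.
From mathcomp Require Import all_classical all_reals all_analysis.
From mathcomp Require Import complex.
From Stdlib Require Import ClassicalEpsilon.

Set Implicit Arguments.
Unset Strict Implicit.
Unset Printing Implicit Defensive.

Import Order.TTheory GRing.Theory Num.Theory.
Import numFieldNormedType.Exports.
Local Open Scope ring_scope.

Section Defs.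
Variable R : realType.

Definition cx (x : R) : R[i] := Complex x 0.
Definition iC : R[i] := Complex 0 1.

Definition sigma1 : 'M[R[i]]_2 :=
  \matrix_(i < 2, j < 2) (if i == j then 0 else 1).
Definition sigma2 : 'M[R[i]]_2 :=
  \matrix_(i < 2, j < 2)
    (if i == j then 0 else if i == 0 then - iC else iC).
Definition sigma3 : 'M[R[i]]_2 :=
  \matrix_(i < 2, j < 2)
    (if i == j then (if i == 0 then 1 else -1) else 0).

Definition J1 : 'M[R[i]]_2 := (2%:R)^-1 *: sigma1.
Definition J2 : 'M[R[i]]_2 := (2%:R)^-1 *: sigma2.

Definition adjmx n m (A : 'M[R[i]]_(n, m)) : 'M[R[i]]_(m, n) :=
  map_mx (fun z : R[i] => z^*) A^T.

(* P is the orthogonal projection onto the eigenspace of A for eigenvalue a: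
   a self-adjoint idempotent whose range (= its fixed vectors) is
   ker (A - a). *)
Definition is_eigproj n (A : 'M[R[i]]_n) (a : R[i]) (P : 'M[R[i]]_n) : Prop :=
  [/\ P *m P = P, adjmx P = P &
      forall v : 'cV[R[i]]_n, (P *m v = v) <-> (A *m v = a *: v)].

(* E_A(a): the (unique) such projection, chosen by definite description. *)
Definition eigproj n (A : 'M[R[i]]_n) (a : R[i]) : 'M[R[i]]_n :=
  epsilon (inhabits 0) (is_eigproj A a).

Definition is_density n (rho : 'M[R[i]]_n) : Prop :=
  [/\ adjmx rho = rho,
      (forall v : 'cV[R[i]]_n, 0 <= (adjmx v *m rho *m v) 0 0)
    & \tr rho = 1].

Definition dir (b : bool) : R * R := if b then (1, 0) else (0, 1).

Fixpoint pderiv (s : seq bool) (f : R * R -> R) : R * R -> R :=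
  match s with
  | [::] => f
  | b :: s' => fun p => derive (pderiv s' f) p (dir b)
  end.

Definition schwartz2 (f : R * R -> R) : Prop :=
  [/\ forall s p b, derivable (pderiv s f) p (dir b),
      forall s, continuous (pderiv s f)
    & forall (a b : nat) s, exists M : R, forall p : R * R,
        `|p.1 ^+ a * p.2 ^+ b * pderiv s f p| <= M].

Fixpoint deriv1n (k : nat) (g : R -> R) : R -> R :=
  match k with
  | O => g
  | k'.+1 => fun x => derive (deriv1n k' g) x 1
  end.

Definition schwartz1 (g : R -> R) : Prop :=
  (forall k x, derivable (deriv1n k g) x 1) /\
  (forall (a k : nat), exists M : R, forall x : R,
      `|x ^+ a * deriv1n k g x| <= M).

(* A complex tempered distribution on R^2 is represented by its action on
   real Schwartz test functions (values outside the Schwartz space are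
   irrelevant): R-linear and continuous for the Schwartz topology. *)
Definition tempered (T : (R * R -> R) -> R[i]) : Prop :=
  (forall (c : R) f g, schwartz2 f -> schwartz2 g ->
     T (fun p => c * f p + g p) = cx c * T f + T g) /\
  (exists (C : R) (N : nat), forall f, schwartz2 f -> forall M : R,
     (forall (a b : nat) s p, (a <= N)%N -> (b <= N)%N -> (size s <= N)%N ->
        `|p.1 ^+ a * p.2 ^+ b * pderiv s f p| <= M) ->
     `|T f| <= cx (C * M)).

Definition distr_eq (T T' : (R * R -> R) -> R[i]) : Prop :=
  forall f, schwartz2 f -> T f = T' f.

Definition ccvg (u : nat -> R[i]) (l : R[i]) : Prop :=
  forall e : R, 0 < e -> exists N : nat, forall n, (N <= n)%N ->
    `|u n - l| < cx e.

(* Marginals, via the distributional integral: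
   (int P(x,y) dy)(phi) = lim_{n->oo} P(phi(x) chi(y/n))
   for every Schwartz chi with chi(0) = 1. *)
Definition xmarginal_is (P : (R * R -> R) -> R[i])
    (L : (R -> R) -> R[i]) : Prop :=
  forall phi chi, schwartz1 phi -> schwartz1 chi -> chi 0 = 1 ->
    ccvg (fun n => P (fun p => phi p.1 * chi (p.2 / n.+1%:R))) (L phi).

Definition ymarginal_is (P : (R * R -> R) -> R[i])
    (L : (R -> R) -> R[i]) : Prop :=
  forall phi chi, schwartz1 phi -> schwartz1 chi -> chi 0 = 1 ->
    ccvg (fun n => P (fun p => chi (p.1 / n.+1%:R) * phi p.2)) (L phi).

(* sum_{alpha = +-1/2} Tr[E_A(alpha) rho] delta(. - alpha), as a functional *)
Definition spin_delta (A rho : 'M[R[i]]_2) : (R -> R) -> R[i] :=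
  fun phi => \sum_(a <- [:: (2%:R)^-1; - (2%:R)^-1])
               \tr (eigproj A (cx a) *m rho) * cx (phi a).

(* P_rho = Tr[# rho], with # given by components W i j *)
Definition Pdist (W : 'I_2 -> 'I_2 -> (R * R -> R) -> R[i])
    (rho : 'M[R[i]]_2) : (R * R -> R) -> R[i] :=
  fun f => \sum_(i < 2) \sum_(j < 2) W i j f * rho j i.

End Defs.

(* The proof only tests the distributions against product Gaussians
   x^a e^(-k x^2) y^b e^(-l y^2), which are Schwartz.  Pairing the x-marginal
   with phi(x) = x e^(-x^2) and the cut-off e^(-(y/n)^2) gives, since
   E_{J_k}(+-1/2) = (1 +- sigma_k)/2 and phi(1/2) <> phi(-1/2), that
   P_rho = P_rho' forces Tr[sigma_1 rho] = Tr[sigma_1 rho'], and likewise for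
   sigma_2 via the y-marginal.  Two density operators with this property agree
   off the diagonal, whence P_rho - P_rho' = (rho_11 - rho'_11) (#_11 - #_22).
   Conversely, if #_11 = #_22 the pure states diag(1,0) and diag(0,1) have the
   same distribution. *)

From HB Require Import structures.
From mathcomp Require Import all_boot all_order all_algebra.
From mathcomp Require Import all_classical all_reals all_analysis.
From mathcomp Require Import complex ring lra.
From Stdlib Require Import ClassicalEpsilon.

Set Implicit Arguments.
Unset Strict Implicit.
Unset Printing Implicit Defensive.
Import Order.TTheory GRing.Theory Num.Theory.
Import numFieldNormedType.Exports.
Local Open Scope ring_scope.

Section GaussianTestFunctions.
Variable R : realType.

Definition gauss (k x : R) : R := expR (- (k * x ^+ 2)).

Definition pgauss (k : R) (P : {poly R}) (x : R) : R := P.[x] * gauss k x.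

Definition gauss_dpoly (k : R) (P : {poly R}) : {poly R} :=
  P^`() - 'X * P * (k *+ 2)%:P.

Lemma is_derive_pgauss (k : R) P (x : R) :
  is_derive x (1 : R) (pgauss k P) (pgauss k (gauss_dpoly k P) x).
Proof.
have dgauss : is_derive x (1 : R) (gauss k) (gauss k x * - (k * (x *+ 2))).
  apply: is_derive1_comp; apply: trigger_derive.
  by rewrite [x%:A]mulr1 -mulr2n.
have -> : pgauss k P = horner P * gauss k by [].
apply: trigger_derive.
rewrite /pgauss /gauss_dpoly !hornerE /= /GRing.scale /= mulr2n; ring.
Qed.

Lemma deriv1n_pgauss (k : R) P n :
  deriv1n n (pgauss k P) = pgauss k (iter n (gauss_dpoly k) P).
Proof.
elim: n => [//|n IH] /=; apply/funext => x.
by rewrite IH; have [] := is_derive_pgauss k (iter n (gauss_dpoly k) P) x.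
Qed.

Lemma continuous_pgauss (k : R) P : continuous (pgauss k P).
Proof.
move=> x; apply/differentiable_continuous/derivable1_diffP.
by have [] := is_derive_pgauss k P x.
Qed.

Lemma pow_le_fact_expR (y : R) i : 0 <= y -> y ^+ i <= i`!%:R * expR y.
Proof.
move=> y0; case: i => [|n]; first by rewrite expr0 mul1r -expR0 ler_expR.
rewrite -ler_pdivrMl ?ltr0n ?fact_gt0// mulrC.
by apply: le_trans (expR_ge1Dxn n y0); rewrite lerDr.
Qed.

Lemma sqr_pow_gauss_le (k : R) i (x : R) :
  0 < k -> (x ^+ 2) ^+ i * gauss k x <= i`!%:R / k ^+ i.
Proof.
move=> k0; have kx2_ge0 : 0 <= k * x ^+ 2 by rewrite mulr_ge0 ?sqr_ge0 ?ltW.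
have -> : (x ^+ 2) ^+ i = (k * x ^+ 2) ^+ i / k ^+ i.
  by rewrite [in RHS]exprMn mulrAC mulfV ?mul1r// expf_neq0 ?gt_eqF.
rewrite /gauss expRN mulrAC ler_pM2r ?invr_gt0 ?exprn_gt0//.
by rewrite ler_pdivrMr ?expR_gt0// pow_le_fact_expR.
Qed.

Lemma norm_pow_gauss_le (k : R) i (x : R) :
  0 < k -> `|x ^+ i| * gauss k x <= 1 + i`!%:R / k ^+ i.
Proof.
move=> k0; have gauss_ge0 : 0 <= gauss k x by exact: expR_ge0.
have : `|x ^+ i| <= 1 + (x ^+ 2) ^+ i.
  rewrite -exprM mulnC exprM -[x ^+ i ^+ 2]real_normK ?realX ?num_real//.
  by have : 0 <= `|x ^+ i| by []; nra.
move=> /(ler_wpM2r gauss_ge0) /le_trans -> //.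
rewrite mulrDl mul1r lerD ?sqr_pow_gauss_le//.
by rewrite expR_le1 oppr_le0 mulr_ge0 ?sqr_ge0 ?ltW.
Qed.

Definition pgauss_bound (k : R) (P : {poly R}) : R :=
  \sum_(j < size P) `|P`_j| * (1 + j`!%:R / k ^+ j).

Lemma norm_pgauss_le (k : R) P (x : R) : 0 < k -> `|pgauss k P x| <= pgauss_bound k P.
Proof.
move=> k0; have gauss_ge0 : 0 <= gauss k x by exact: expR_ge0.
rewrite normrM (ger0_norm gauss_ge0) horner_coef.
apply: le_trans (ler_wpM2r gauss_ge0 (ler_norm_sum _ _ _)) _.
rewrite mulr_suml; apply: ler_sum => j _.
by rewrite normrM -mulrA ler_wpM2l ?norm_pow_gauss_le.
Qed.

Lemma norm_mon_pgauss_le (k : R) P a (x : R) : 0 < k ->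
  `|x ^+ a * pgauss k P x| <= pgauss_bound k ('X^a * P).
Proof.
by move=> k0; rewrite /pgauss mulrA -hornerXn -hornerM norm_pgauss_le.
Qed.

Lemma schwartz1_pgauss (k : R) P : 0 < k -> schwartz1 (pgauss k P).
Proof.
move=> k0; split=> [n x|a n].
  by rewrite deriv1n_pgauss; have [] := is_derive_pgauss k (iter n (gauss_dpoly k) P) x.
exists (pgauss_bound k ('X^a * iter n (gauss_dpoly k) P)) => x.
by rewrite deriv1n_pgauss norm_mon_pgauss_le.
Qed.

Lemma is_derive_along (F : R * R -> R) (p v : R * R) (g : R -> R) (x c dg : R) :
  (forall t, F (t *: v + p) = c * g (t + x)) ->
  is_derive x (1 : R) g dg -> is_derive p v F (c * dg).
Proof.
move=> Fg [gd <-].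
have E : (fun t : R => t^-1 *: ((F \o shift p) (t *: v) - F p)) =
         (fun t => c * (t^-1 *: ((g \o shift x) (t *: 1) - g x))).
  apply/funext => t /=; have := Fg 0; rewrite scale0r add0r => ->.
  by rewrite Fg /GRing.scale /= mulr1 add0r; ring.
split; first by rewrite /derivable E; exact: is_cvgMr.
by rewrite /derive E (limM (is_cvg_cst _) gd) lim_cst.
Qed.

Definition pgauss2 (k1 : R) (P : {poly R}) (k2 : R) (Q : {poly R}) (q : R * R) : R :=
  pgauss k1 P q.1 * pgauss k2 Q q.2.

Lemma is_derive_pgauss2 (k1 : R) P (k2 : R) Q p b :
  is_derive p (dir R b) (pgauss2 k1 P k2 Q)
    (if b then pgauss2 k1 (gauss_dpoly k1 P) k2 Q p
     else pgauss2 k1 P k2 (gauss_dpoly k2 Q) p).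
Proof.
case: p => x y; case: b; rewrite /pgauss2 /=.
  rewrite mulrC; apply: is_derive_along (is_derive_pgauss _ _ _) => t.
  by rewrite /pgauss2 /= /GRing.scale /= mulr1 mulr0 add0r mulrC.
apply: is_derive_along (is_derive_pgauss _ _ _) => t.
by rewrite /pgauss2 /= /GRing.scale /= mulr1 mulr0 add0r.
Qed.

Lemma pderiv_pgauss2 s (k1 : R) P (k2 : R) Q :
  exists P' Q', pderiv s (pgauss2 k1 P k2 Q) = pgauss2 k1 P' k2 Q'.
Proof.
elim: s => [|b s [P' [Q' IH]]]; first by exists P, Q.
exists (if b then gauss_dpoly k1 P' else P'), (if b then Q' else gauss_dpoly k2 Q').
apply/funext => p /=; rewrite IH.
by have [_ ->] := is_derive_pgauss2 k1 P' k2 Q' p b; case: b.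
Qed.

Lemma continuous_pgauss2 (k1 : R) P (k2 : R) Q : continuous (pgauss2 k1 P k2 Q).
Proof.
have -> : pgauss2 k1 P k2 Q = (pgauss k1 P \o fst) \* (pgauss k2 Q \o snd) by [].
move=> q; apply: continuousM.
  by apply: continuous_comp; [exact: cvg_fst | exact: continuous_pgauss].
by apply: continuous_comp; [exact: cvg_snd | exact: continuous_pgauss].
Qed.

Lemma schwartz2_pgauss2 (k1 : R) P (k2 : R) Q :
  0 < k1 -> 0 < k2 -> schwartz2 (pgauss2 k1 P k2 Q).
Proof.
move=> k10 k20; split=> [s p b|s|a b s];
  have [P' [Q' ->]] := pderiv_pgauss2 s k1 P k2 Q.
- by have [] := is_derive_pgauss2 k1 P' k2 Q' p b.
- exact: continuous_pgauss2.
exists (pgauss_bound k1 ('X^a * P') * pgauss_bound k2 ('X^b * Q')) => -[x y].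
by rewrite /pgauss2 /= mulrACA normrM ler_pM ?norm_mon_pgauss_le.
Qed.

End GaussianTestFunctions.

Section Marginals.
Variable R : realType.
Local Notation C := R[i].

Lemma ccvg_uniq (u v : nat -> C) L L' : ccvg u L -> ccvg v L' -> u =1 v -> L = L'.
Proof.
move=> uL + /funext uv; rewrite -uv => uL'.
case: (eqVneq L L') => //; rewrite -subr_eq0 -normr_gt0.
have [r rE] : exists r, `|L - L'| = cx r by rewrite normc_def; eexists.
rewrite rE -(rmorph0 (real_complex R)) ltcR => r0.
have [N1 h1] := uL _ (divr_gt0 r0 (ltr0Sn _ 1)).
have [N2 h2] := uL' _ (divr_gt0 r0 (ltr0Sn _ 1)).
set n := maxn N1 N2; have lt_rr : `|L - L'| < cx r.
  apply: le_lt_trans (ler_distD (u n) _ _) _.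
  rewrite [X in cx X]splitr -[@cx R]/(real_complex R) rmorphD distrC.
  by rewrite ltrD ?h1 ?h2 ?leq_maxl ?leq_maxr.
by rewrite rE ltxx in lt_rr.
Qed.

Lemma pgauss1_div (k a y : R) : pgauss k 1 (y / a) = pgauss (k / a ^+ 2) 1 y.
Proof. by rewrite /pgauss /gauss !hornerC expr_div_n mulrA mulrAC. Qed.

Lemma pgauss1_0 (k : R) : pgauss k 1 0 = 1 :> R.
Proof. by rewrite /pgauss /gauss hornerC expr0n mulr0 oppr0 expR0 mulr1. Qed.

Lemma xmarginal_pgauss_eq (P P' : (R * R -> R) -> C) L L' (k : R) Q : 0 < k ->
  distr_eq P P' -> xmarginal_is P L -> xmarginal_is P' L' ->
  L (pgauss k Q) = L' (pgauss k Q).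
Proof.
move=> k0 PP' PL P'L.
have Q1 := schwartz1_pgauss Q k0.
have S1 : schwartz1 (pgauss (1 : R) 1) by exact: schwartz1_pgauss.
apply: (ccvg_uniq (PL _ _ Q1 S1 (pgauss1_0 1)) (P'L _ _ Q1 S1 (pgauss1_0 1))) => n.
apply: PP'; under eq_fun do rewrite pgauss1_div.
by apply: schwartz2_pgauss2; rewrite ?mul1r ?invr_gt0 ?exprn_gt0.
Qed.

Lemma ymarginal_pgauss_eq (P P' : (R * R -> R) -> C) L L' (k : R) Q : 0 < k ->
  distr_eq P P' -> ymarginal_is P L -> ymarginal_is P' L' ->
  L (pgauss k Q) = L' (pgauss k Q).
Proof.
move=> k0 PP' PL P'L.
have Q1 := schwartz1_pgauss Q k0.
have S1 : schwartz1 (pgauss (1 : R) 1) by exact: schwartz1_pgauss.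
apply: (ccvg_uniq (PL _ _ Q1 S1 (pgauss1_0 1)) (P'L _ _ Q1 S1 (pgauss1_0 1))) => n.
apply: PP'; under eq_fun do rewrite pgauss1_div.
by apply: schwartz2_pgauss2; rewrite ?mul1r ?invr_gt0 ?exprn_gt0.
Qed.

End Marginals.

Section Eigenprojections.
Variables (R : realType) (n : nat).
Local Notation C := R[i].
Local Notation h := (2%:R : C)^-1.

Lemma adjmxE m p (A : 'M[C]_(m, p)) i j : adjmx A i j = (A j i)^*.
Proof. by rewrite !mxE. Qed.

Lemma adjmxM m p q (A : 'M[C]_(m, p)) (B : 'M[C]_(p, q)) :
  adjmx (A *m B) = adjmx B *m adjmx A.
Proof. by rewrite /adjmx trmx_mul map_mxM. Qed.

Lemma mulmx_colP (A B : 'M[C]_n) : (forall v : 'cV[C]_n, A *m v = B *m v) -> A = B.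
Proof.
move=> AB; apply/matrixP => i j.
by have /matrixP/(_ i 0) := AB (delta_mx j 0); rewrite -!colE !mxE.
Qed.

Lemma is_eigproj_uniq (A : 'M[C]_n) a P Q :
  is_eigproj A a P -> is_eigproj A a Q -> P = Q.
Proof.
move=> [PP Padj Pv] [QQ Qadj Qv].
have QP : Q *m P = P.
  by apply: mulmx_colP => u; rewrite -mulmxA; apply/Qv/Pv; rewrite mulmxA PP.
have PQ : P *m Q = Q.
  by apply: mulmx_colP => u; rewrite -mulmxA; apply/Pv/Qv; rewrite mulmxA QQ.
by rewrite -Padj -QP adjmxM Padj Qadj PQ.
Qed.

Lemma eigprojE (A : 'M[C]_n) a P : is_eigproj A a P -> eigproj A a = P.
Proof.
move=> AP; apply: (is_eigproj_uniq _ AP).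
by apply: epsilon_spec; exists P.
Qed.

Lemma is_eigproj_half_involution (S : 'M[C]_n) (s : C) :
  S *m S = 1%:M -> adjmx S = S -> s * s = 1 -> s^* = s ->
  is_eigproj (h *: S) (h * s) (h *: (1%:M + s *: S)).
Proof.
move=> SS Sadj ss sreal; have two0 : 2%:R != 0 :> C by rewrite pnatr_eq0.
have hs0 : h * s != 0.
  rewrite mulf_eq0 invr_eq0 (negbTE two0) /=; apply/eqP => s0.
  by move: ss; rewrite s0 mul0r => /eqP; rewrite eq_sym oner_eq0.
split.
- rewrite -scalemxAl -scalemxAr scalerA mulmxDl !mulmxDr mul1mx mulmx1.
  rewrite -!scalemxAl -!scalemxAr !scalerA SS ss mul1mx scale1r [s *: S + _]addrC.
  by rewrite -mulr2n -scalerMnr scalerMnl -mulr_natr divfK.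
- apply/matrixP => i j; rewrite adjmxE !mxE rmorphM rmorphD rmorphM /= -adjmxE Sadj sreal.
  by rewrite fmorphV !rmorph_nat eq_sym.
move=> v; have key : h *: (1%:M + s *: S) *m v - v = (h * s) *: (S *m v - s *: v).
  rewrite scalerBr scalerA -mulrA ss mulr1 -scalemxAl mulmxDl mul1mx -scalemxAl.
  by apply/matrixP => i j; rewrite !mxE; field.
rewrite (rwP eqP) -subr_eq0 key scaler_eq0 (negbTE hs0) -scalemxAl -scalerA.
by rewrite (rwP eqP) (inj_eq (scalerI _)) ?invr_eq0 // subr_eq0.
Qed.

Lemma is_density_delta_mx i : is_density (delta_mx i i : 'M[C]_n).
Proof.
split.
- by rewrite /adjmx trmx_delta; apply/matrixP => k l; rewrite !mxE rmorph_nat.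
- move=> v; rewrite -(mul_delta_mx (0 : 'I_1)) mulmxA -colE -mulmxA -rowE.
  by rewrite !mxE big_ord1 !mxE mulrC mul_conjC_ge0.
- rewrite /mxtrace (bigD1 i) //= big1 => [|k /negbTE ki]; rewrite mxE ?ki ?eqxx ?addr0 //.
Qed.

End Eigenprojections.

Section PauliSpin.
Variable R : realType.
Local Notation C := R[i].
Local Notation h := (2%:R : C)^-1.
Local Notation i0 := (ord0 : 'I_2).
Local Notation i1 := (ord_max : 'I_2).

Lemma sum_ord2 (F : 'I_2 -> C) : \sum_(i < 2) F i = F i0 + F i1.
Proof. by rewrite big_ord_recr big_ord1 /=; congr (F _ + _); apply: val_inj. Qed.

Lemma ord2P (i : 'I_2) : i = i0 \/ i = i1.
Proof. by case: i => -[|[|//]] ?; [left | right]; apply: val_inj. Qed.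

Lemma iC2 : iC R * iC R = -1.
Proof. by rewrite -expr2 sqr_i. Qed.

Lemma conj_iC : (iC R)^* = - iC R.
Proof. by apply/eqP; rewrite eq_complex /= oppr0 !eqxx. Qed.

Lemma sigma1_involutive : sigma1 R *m sigma1 R = 1%:M.
Proof.
apply/matrixP => i j; rewrite !mxE sum_ord2 !mxE.
case: (ord2P i) => ->; case: (ord2P j) => ->;
  by rewrite /= ?(mulr0, mul0r, mulr1, addr0, add0r).
Qed.

Lemma sigma2_involutive : sigma2 R *m sigma2 R = 1%:M.
Proof.
apply/matrixP => i j; rewrite !mxE sum_ord2 !mxE.
case: (ord2P i) => ->; case: (ord2P j) => ->;
  by rewrite /= ?(mulr0, mul0r, mulr1, addr0, add0r, mulNr, mulrN, iC2, opprK).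
Qed.

Lemma sigma1_adj : adjmx (sigma1 R) = sigma1 R.
Proof.
apply/matrixP => i j; rewrite adjmxE !mxE eq_sym.
by case: (i == j); rewrite ?rmorph0 ?rmorph1.
Qed.

Lemma sigma2_adj : adjmx (sigma2 R) = sigma2 R.
Proof.
apply/matrixP => i j; rewrite adjmxE !mxE.
case: (ord2P i) => ->; case: (ord2P j) => ->;
  by rewrite /= ?rmorph0 ?rmorphN /= ?conj_iC ?opprK.
Qed.

Lemma cx_half : cx (2^-1 : R) = h.
Proof. by rewrite -[@cx R]/(real_complex R) fmorphV rmorph_nat. Qed.

Lemma cx_Nhalf : cx (- 2^-1 : R) = - h.
Proof. by rewrite -[@cx R]/(real_complex R) rmorphN fmorphV rmorph_nat. Qed.

Section HalfInvolution.
Variable S : 'M[C]_2.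
Hypotheses (SS : S *m S = 1%:M) (Sadj : adjmx S = S).

Lemma eigproj_half_involution_pos : eigproj (h *: S) (cx (2^-1)) = h *: (1%:M + S).
Proof.
apply: eigprojE; have := is_eigproj_half_involution SS Sadj (mulr1 1) (rmorph1 _).
by rewrite cx_half mulr1 scale1r.
Qed.

Lemma eigproj_half_involution_neg : eigproj (h *: S) (cx (- 2^-1)) = h *: (1%:M - S).
Proof.
apply: eigprojE.
have := is_eigproj_half_involution SS Sadj (etrans (mulN1r _) (opprK 1)) (rmorphN1 _).
by rewrite cx_Nhalf mulrN1 scaleN1r.
Qed.

Lemma spin_delta_half_involution rho phi :
  spin_delta (h *: S) rho phi =
  h * (\tr rho * (cx (phi 2^-1) + cx (phi (- 2^-1))) +
       \tr (S *m rho) * (cx (phi 2^-1) - cx (phi (- 2^-1)))).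
Proof.
rewrite /spin_delta !big_cons big_nil addr0.
rewrite eigproj_half_involution_pos eigproj_half_involution_neg.
rewrite -!scalemxAl !mxtraceZ mulmxDl mulmxBl mul1mx mxtraceD raddfB; ring.
Qed.

Lemma mxtrace_mul_eq_of_spin_delta rho rho' :
  \tr rho = \tr rho' ->
  spin_delta (h *: S) rho (pgauss 1 'X) = spin_delta (h *: S) rho' (pgauss 1 'X) ->
  \tr (S *m rho) = \tr (S *m rho').
Proof.
have h0 : h != 0 by rewrite invr_eq0 pnatr_eq0.
have jump0 : cx (pgauss (1 : R) 'X 2^-1) - cx (pgauss 1 'X (- 2^-1)) != 0.
  rewrite eq_complex /= /pgauss /gauss !hornerX sqrrN -mulrBl opprK negb_and.
  by rewrite mulf_neq0 // lt0r_neq0 // ?expR_gt0 ?addr_gt0 ?invr_gt0.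
rewrite (spin_delta_half_involution rho) (spin_delta_half_involution rho') => ->.
by move=> /(mulfI h0) /addrI /(mulIf jump0).
Qed.

End HalfInvolution.

Lemma mxtrace_sigma1_mul (A : 'M[C]_2) : \tr (sigma1 R *m A) = A i0 i1 + A i1 i0.
Proof. rewrite /mxtrace sum_ord2 !mxE !sum_ord2 !mxE /=; ring. Qed.

Lemma mxtrace_sigma2_mul (A : 'M[C]_2) :
  \tr (sigma2 R *m A) = iC R * (A i0 i1 - A i1 i0).
Proof. rewrite /mxtrace sum_ord2 !mxE !sum_ord2 !mxE /=; ring. Qed.

Lemma offdiag_eq_pauli (A B : 'M[C]_2) :
  \tr (sigma1 R *m A) = \tr (sigma1 R *m B) ->
  \tr (sigma2 R *m A) = \tr (sigma2 R *m B) ->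
  A i0 i1 = B i0 i1 /\ A i1 i0 = B i1 i0.
Proof.
have iC0 : iC R != 0 by rewrite eq_complex /= oner_eq0 andbF.
rewrite !mxtrace_sigma1_mul !mxtrace_sigma2_mul => eD /(mulfI iC0) eB.
have two0 : 2%:R != 0 :> C by rewrite pnatr_eq0.
have sum_diff (x y : C) : x = h * ((x + y) + (x - y)) /\ y = h * ((x + y) - (x - y)).
  by split; field.
have [a1 a2] := sum_diff (A i0 i1) (A i1 i0).
have [b1 b2] := sum_diff (B i0 i1) (B i1 i0).
by split; [rewrite a1 b1 | rewrite a2 b2]; rewrite eD eB.
Qed.

Lemma mx2_eq_pauli (A B : 'M[C]_2) :
  \tr A = \tr B -> A i0 i0 = B i0 i0 ->
  \tr (sigma1 R *m A) = \tr (sigma1 R *m B) ->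
  \tr (sigma2 R *m A) = \tr (sigma2 R *m B) ->
  A = B.
Proof.
move=> trAB e00 /offdiag_eq_pauli e /e [e01 e10].
have e11 : A i1 i1 = B i1 i1 by move: trAB; rewrite /mxtrace !sum_ord2 e00 => /addrI.
by apply/matrixP => i j; case: (ord2P i) => ->; case: (ord2P j) => ->.
Qed.

Lemma Pdist_delta_mx (W : 'I_2 -> 'I_2 -> (R * R -> R) -> C) i f :
  Pdist W (delta_mx i i) f = W i i f.
Proof.
rewrite /Pdist !sum_ord2 !mxE.
by case: (ord2P i) => ->; rewrite /= !(mulr0, mulr1, addr0, add0r).
Qed.

Lemma Pdist_sub_pauli (W : 'I_2 -> 'I_2 -> (R * R -> R) -> C) rho rho' f :
  \tr rho = \tr rho' ->
  \tr (sigma1 R *m rho) = \tr (sigma1 R *m rho') ->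
  \tr (sigma2 R *m rho) = \tr (sigma2 R *m rho') ->
  Pdist W rho f - Pdist W rho' f =
  (rho i0 i0 - rho' i0 i0) * (W i0 i0 f - W i1 i1 f).
Proof.
move=> + /offdiag_eq_pauli e /e [e01 e10]; rewrite /mxtrace !sum_ord2 => tr_eq.
have e11 : rho i1 i1 = rho' i0 i0 + rho' i1 i1 - rho i0 i0.
  by rewrite -tr_eq addrC addKr.
by rewrite /Pdist !sum_ord2 e01 e10 e11; ring.
Qed.

End PauliSpin.

Theorem lemma2 (R : realType) (W : 'I_2 -> 'I_2 -> (R * R -> R) -> R[i]) :
  (forall i j, tempered (W i j)) ->
  (forall rho : 'M[R[i]]_2, is_density rho ->
     xmarginal_is (Pdist W rho) (spin_delta (J1 R) rho) /\
     ymarginal_is (Pdist W rho) (spin_delta (J2 R) rho)) ->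
  ((forall rho rho' : 'M[R[i]]_2, is_density rho -> is_density rho' ->
      distr_eq (Pdist W rho) (Pdist W rho') -> rho = rho') <->
   ~ distr_eq (W ord0 ord0) (W ord_max ord_max)).
Proof.
move=> _ marginals; split=> [inj W00_W11 | W00_W11 rho rho' rhoD rho'D P_eq].
  have P_eq : distr_eq (Pdist W (delta_mx ord0 ord0)) (Pdist W (delta_mx ord_max ord_max)).
    by move=> f fS; rewrite !Pdist_delta_mx W00_W11.
  have := inj _ _ (is_density_delta_mx _ _) (is_density_delta_mx _ _) P_eq.
  by move=> /matrixP/(_ ord0 ord0)/eqP; rewrite !mxE eqxx /= oner_eq0.
have tr_eq : \tr rho = \tr rho' by case: rhoD rho'D => _ _ -> [_ _ ->].
have sigma1_eq := mxtrace_mul_eq_of_spin_delta (sigma1_involutive R) (sigma1_adj R) tr_eq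
  (xmarginal_pgauss_eq 'X ltr01 P_eq (marginals _ rhoD).1 (marginals _ rho'D).1).
have sigma2_eq := mxtrace_mul_eq_of_spin_delta (sigma2_involutive R) (sigma2_adj R) tr_eq
  (ymarginal_pgauss_eq 'X ltr01 P_eq (marginals _ rhoD).2 (marginals _ rho'D).2).
have e00 : rho ord0 ord0 = rho' ord0 ord0.
  case: (eqVneq (rho ord0 ord0) (rho' ord0 ord0)) => // ne; exfalso.
  apply: W00_W11 => f fS; have := Pdist_sub_pauli W f tr_eq sigma1_eq sigma2_eq.
  rewrite (P_eq f fS) subrr => /esym/eqP.
  by rewrite mulf_eq0 subr_eq0 (negbTE ne) subr_eq0 => /eqP.
exact: mx2_eq_pauli.
Qed.
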